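(* Let $d\ge 2$ and let $a=(a_1,\dots,a_d)\in\mathcal{UN}_d$. Then there exists a special symmetric Toeplitz matrix $T_{\alpha,\beta}$ (of size $d\times d$) which is a matrix associated to the sequence $a$. The constant $\alpha$ is uniquely determined. For $d=2$ there are two choices for $\beta$, namely $\beta$ or $-\beta$. If $d\ge3$, then $\beta$ is uniquely determined.
   Context: A polynomial in $\mathbb{R}[z]$ is hyperbolic if all its roots are real. A sequence $a\in\mathbb{R}^d$ is a Nuij sequence if for every hyperbolic $p\in\mathbb{R}[z]$ of degree $d$, $p_a(z,s):=p(z)+\sum_{k=1}^d a_k s^k p^{(k)}(z)$ is hyperbolic for all $s\in\mathbb{R}$. A Nuij sequence $a$ admits a universal determinantal representation if there exists a real symmetric $d\times d$ matrix $A_a$ such that for every monic hyperbolic polynomial $p(z)=(z+\lambda_1)\cdots(z+\lambda_d)$ of degree $d$ one has $p_a(z,s)=\det(zI+D+sA_a)$, where $D$ is the diagonal matrix with diagonal entries $\lambda_1,\dots,\lambda_d$ written in an arbitrary order (so $\det(zI+D)=p(z)$); such $A_a$ is called a matrix associated to $a$. $\mathcal{UN}_d$ is the set of Nuij sequences in $\mathbb{R}^d$ admitting a universal determinantal representation. For $\alpha,\beta\in\mathbb{R}$, the special symmetric Toeplitz matrix $T_{\alpha,\beta}$ is the matrix with all diagonal entries equal to $\alpha$ and all off-diagonal entries equal to $\beta$. *)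

From HB Require Import structures.
From mathcomp Require Import all_boot all_order all_algebra.
From mathcomp Require Import reals.
Set Implicit Arguments. Unset Strict Implicit. Unset Printing Implicit Defensive.
Import Order.TTheory GRing.Theory Num.Theory.
Local Open Scope ring_scope.

Definition hyperbolic (R : realType) (p : {poly R}) : Prop :=
  exists s : seq R, p = lead_coef p *: \prod_(x <- s) ('X - x%:P).

(* p_a(z,s) = p(z) + sum_{k=1}^d a_k s^k p^{(k)}(z), as a polynomial in z for
   fixed s.  The sequence a = (a_1,...,a_d) is a : 'I_d -> R with a_{k} = a (k-1). *)
Definition pa (R : realType) (d : nat) (a : 'I_d -> R) (p : {poly R}) (s : R)
  : {poly R} :=
  p + \sum_(i < d) (a i * s ^+ i.+1) *: p^`(i.+1).

Definition nuij (R : realType) (d : nat) (a : 'I_d -> R) : Prop :=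
  forall p : {poly R}, size p = d.+1 -> hyperbolic p ->
    forall s : R, hyperbolic (pa a p s).

Definition detzI (R : realType) (d : nat) (M : 'M[R]_d) : {poly R} :=
  \det ('X%:M + map_mx polyC M).

(* A is a matrix associated to a: real symmetric, and for every monic
   hyperbolic p = (z+l_1)...(z+l_d) and every ordering of the l_i
   (captured by quantifying over all l : 'I_d -> R),
   p_a(z,s) = det(zI + diag(l) + s A) for all s. *)
Definition associated (R : realType) (d : nat) (a : 'I_d -> R) (A : 'M[R]_d)
  : Prop :=
  A^T = A /\
  forall (l : 'I_d -> R) (s : R),
    pa a (\prod_(i < d) ('X + (l i)%:P)) s
    = detzI (diag_mx (\row_i l i) + s *: A).

Definition UN (R : realType) (d : nat) (a : 'I_d -> R) : Prop :=
  nuij a /\ exists A : 'M[R]_d, associated a A.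

Definition toeplitz (R : realType) (d : nat) (alpha beta : R) : 'M[R]_d :=
  \matrix_(i, j) (if i == j then alpha else beta).

From HB Require Import structures.
From mathcomp Require Import all_boot all_order all_algebra.
From mathcomp Require Import reals.
From mathcomp Require Import perm action primitive_action alt.
From mathcomp Require Import ring.
Import Order.TTheory GRing.Theory Num.Theory.
Local Open Scope ring_scope.
Set Implicit Arguments. Unset Strict Implicit. Unset Printing Implicit Defensive.

(* If A is associated to a, then det (diag l + A) is the value at z = 0, s = 1
   of p_a for p = prod_i (z + l_i): a symmetric function of l that depends on
   a only.  Varying one l_i at a time extracts the principal minors, so all
   principal minors of A of a given size are equal, and two matrices
   associated to a have the same principal minors.  The minors of size 1, 2
   and 3 give A_ii = alpha, A_ij^2 = beta^2 and A_ij A_jk A_ik = beta^3 for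
   distinct i, j, k; conjugating by a diagonal sign matrix, which preserves
   associatedness, then turns A into T_{alpha,beta}.  Conversely the leading
   minors of two associated Toeplitz matrices determine alpha, beta^2 and,
   when d >= 3, beta^3, hence beta. *)

Section ShiftDeterminant.
Variable R : comNzRingType.

Definition shift_det n (M : 'M[R]_n) (l : 'I_n -> R) : R :=
  \det (diag_mx (\row_i l i) + M).

Definition same_shift_det n (M N : 'M[R]_n) : Prop :=
  forall l, shift_det M l = shift_det N l.

Definition symmetric_shift_det n (M : 'M[R]_n) : Prop :=
  forall (s : 'S_n) l, shift_det M (l \o s) = shift_det M l.

Lemma shift_det0 n (M : 'M[R]_n) : shift_det M (fun=> 0) = \det M.
Proof. by congr (\det _); apply/matrixP => i j; rewrite !mxE mul0rn add0r. Qed.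

Lemma det_add_delta n (B : 'M[R]_n) i c :
  \det (B + c *: delta_mx i i) = \det B + c * cofactor B i i.
Proof.
rewrite (expand_det_row _ i) (expand_det_row B i).
have cofE j : cofactor (B + c *: delta_mx i i) i j = cofactor B i j.
  rewrite /cofactor; congr (_ * \det _); apply/matrixP => x y; rewrite !mxE.
  by rewrite eq_sym (negbTE (neq_lift i x)) mulr0 addr0.
under eq_bigr do rewrite cofE !mxE eqxx mulrDl.
rewrite big_split /=; congr (_ + _).
rewrite (bigD1 i) //= eqxx mulr1 big1 ?addr0 // => j /negbTE ->.
by rewrite mulr0 mul0r.
Qed.

Section ExtendLast.
Variables (n : nat) (l : 'I_n -> R).

Definition extend_last (c : R) (j : 'I_n.+1) : R :=
  if unlift ord_max j is Some j' then l j' else c.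

Lemma shift_det_extend_last (M : 'M[R]_n.+1) c :
  shift_det M (extend_last c) = shift_det M (extend_last 0)
    + c * shift_det (mxsub (lift ord_max) (lift ord_max) M) l.
Proof.
have liftE (x : 'I_n) : (lift ord_max x == ord_max) = false.
  by rewrite eq_sym (negbTE (neq_lift _ _)).
have maxE (x : 'I_n) : (ord_max == lift ord_max x) = false.
  exact: negbTE (neq_lift _ _).
rewrite /shift_det.
have -> : diag_mx (\row_i extend_last c i) + M
    = diag_mx (\row_i extend_last 0 i) + M + c *: delta_mx ord_max ord_max.
  apply/matrixP => x y; rewrite !mxE /extend_last.
  case: (unliftP ord_max x) => [x'|] ->; case: (unliftP ord_max y) => [y'|] ->;
    rewrite ?eqxx ?liftE ?maxE ?andbF ?andbT /=;
    by rewrite ?mulr0 ?mulr1 ?mulr0n ?mulr1n ?addr0 ?add0r ?[c + _]addrC.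
rewrite (det_add_delta (diag_mx _ + M)); congr (_ + _ * _).
rewrite /cofactor addnn -signr_odd odd_double expr0 mul1r; congr (\det _).
by apply/matrixP => x y; rewrite !mxE /extend_last !liftK (inj_eq lift_inj).
Qed.
End ExtendLast.

Lemma same_shift_det_drop_last n (M N : 'M[R]_n.+1) :
  same_shift_det M N ->
  same_shift_det (mxsub (lift ord_max) (lift ord_max) M)
                 (mxsub (lift ord_max) (lift ord_max) N).
Proof.
move=> MN l; have := MN (extend_last l 1).
by rewrite !(shift_det_extend_last l _ 1) MN !mul1r => /addrI.
Qed.

Lemma same_shift_det_lead n (M N : 'M[R]_n) k (h : (k <= n)%N) :
  same_shift_det M N ->
  same_shift_det (mxsub (widen_ord h) (widen_ord h) M)
                 (mxsub (widen_ord h) (widen_ord h) N).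
Proof.
elim: n M N k h => [|n IH] M N k h MN.
  by case: k h => // h l; rewrite /shift_det !det_mx00.
have [kn|] := leqP k n; last first.
  move=> nk; have kE : k = n.+1 by apply/eqP; rewrite eqn_leq h.
  subst k; have wE : widen_ord h =1 id by move=> x; apply: val_inj.
  by rewrite !(mxsub_eq_id wE wE).
have wE : widen_ord h =1 lift ord_max \o widen_ord kn.
  by move=> x; apply: val_inj; rewrite /= /bump leqNgt (leq_trans (ltn_ord x)).
have subE (P : 'M[R]_n.+1) : mxsub (widen_ord h) (widen_ord h) P
    = mxsub (widen_ord kn) (widen_ord kn) (mxsub (lift ord_max) (lift ord_max) P).
  by rewrite -mxsub_comp; apply: eq_mxsub.
rewrite !subE.
exact/IH/same_shift_det_drop_last.
Qed.

Lemma widen_ord_inj n k (h : (k <= n)%N) : injective (widen_ord h).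
Proof. by move=> x y e; apply: val_inj; exact: (congr1 val e). Qed.

Lemma perm_extend n k (h : (k <= n)%N) (f : 'I_k -> 'I_n) : injective f ->
  exists s : 'S_n, forall x, s (widen_ord h x) = f x.
Proof.
move=> injf.
have tuniq (u : 'I_k -> 'I_n) : injective u -> [tuple u x | x < k] \in k.-dtuple(setT).
  move=> inju; rewrite inE map_inj_uniq ?enum_uniq //=.
have Sym_ntrans : [transitive^k 'Sym_('I_n), on setT | 'P].
  by apply: ntransitive_weak (Sym_trans _); rewrite card_ord.
have [s _ sE] := atransP2 Sym_ntrans (tuniq _ (widen_ord_inj (h:=h))) (tuniq _ injf).
exists s => x; move/(congr1 (fun t : k.-tuple _ => tnth t x)): sE.
by rewrite tnth_mktuple /n_act tnth_map tnth_mktuple => ->.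
Qed.

Lemma det_mxsub_perm n (s : 'S_n) (M : 'M[R]_n) : \det (mxsub s s M) = \det M.
Proof.
have -> : mxsub s s M = row_perm s (col_perm s M) by apply/matrixP => i j; rewrite !mxE.
rewrite row_permE col_permE !det_mulmx !det_perm odd_permV mulrCA.
by rewrite -expr2 sqrr_sign mulr1.
Qed.

Lemma shift_det_mxsub_perm n (s : 'S_n) (M : 'M[R]_n) l :
  shift_det (mxsub s s M) l = shift_det M (l \o (s^-1)%g).
Proof.
rewrite /shift_det -[RHS](det_mxsub_perm s); congr (\det _).
by apply/matrixP => i j; rewrite !mxE /= permK (inj_eq perm_inj).
Qed.

Lemma same_shift_det_pminor n (M N : 'M[R]_n) k (f : 'I_k -> 'I_n) :
  same_shift_det M N -> injective f -> \det (mxsub f f M) = \det (mxsub f f N).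
Proof.
move=> MN injf; have kn : (k <= n)%N by rewrite -[k]card_ord -[n]card_ord (leq_card f injf).
have [s sE] := perm_extend kn injf.
have subE (P : 'M[R]_n) : mxsub f f P = mxsub (widen_ord kn) (widen_ord kn) (mxsub s s P).
  by apply/matrixP => i j; rewrite !mxE !sE.
rewrite !subE -!shift_det0; apply: same_shift_det_lead => l.
by rewrite !shift_det_mxsub_perm.
Qed.

Lemma symmetric_shift_det_pminor n (M : 'M[R]_n) k (f g : 'I_k -> 'I_n) :
  symmetric_shift_det M -> injective f -> injective g ->
  \det (mxsub f f M) = \det (mxsub g g M).
Proof.
move=> symM injf injg.
have kn : (k <= n)%N by rewrite -[k]card_ord -[n]card_ord (leq_card f injf).
suff leadE (u : 'I_k -> 'I_n) : injective u ->
    \det (mxsub u u M) = \det (mxsub (widen_ord kn) (widen_ord kn) M).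
  by rewrite leadE // leadE.
move=> inju; have [s sE] := perm_extend kn inju.
have -> : mxsub u u M = mxsub (widen_ord kn) (widen_ord kn) (mxsub s s M).
  by apply/matrixP => i j; rewrite !mxE !sE.
apply: same_shift_det_pminor (widen_ord_inj (h:=kn)) => l.
by rewrite shift_det_mxsub_perm symM.
Qed.
End ShiftDeterminant.

Lemma det_mx22 (R : comNzRingType) (M : 'M[R]_2) :
  \det M = M 0 0 * M 1 1 - M 0 1 * M 1 0.
Proof.
rewrite (expand_det_row _ 0) !big_ord_recl big_ord0 /cofactor !det_mx11 !mxE /=.
have l1 : lift 0 0 = 1 :> 'I_2 by apply: val_inj.
have l0 : lift 1 0 = 0 :> 'I_2 by apply: val_inj.
rewrite !l1 l0 /bump /=; ring.
Qed.

Section PrincipalMinorFormulas.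
Variables (R : comNzRingType) (n : nat) (M : 'M[R]_n).

Lemma det_mxsub_tuple2 (i j : 'I_n) :
  \det (mxsub (tnth [tuple i; j]) (tnth [tuple i; j]) M)
  = M i i * M j j - M i j * M j i.
Proof. by rewrite det_mx22 !mxE !(tnth_nth i). Qed.

Lemma det_mxsub_tuple3 (i j k : 'I_n) :
  \det (mxsub (tnth [tuple i; j; k]) (tnth [tuple i; j; k]) M)
  = M i i * (M j j * M k k - M j k * M k j)
    - M i j * (M j i * M k k - M j k * M k i)
    + M i k * (M j i * M k j - M j j * M k i).
Proof.
rewrite (expand_det_row _ 0) !big_ord_recl big_ord0 /cofactor !det_mx22 !mxE.
by rewrite !(tnth_nth i) /= /bump /=; ring.
Qed.
End PrincipalMinorFormulas.

Section PrincipalMinorsEntries.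
Variables (R : numDomainType) (n : nat) (M : 'M[R]_n).
Hypotheses (symM : symmetric_shift_det M) (trM : M^T = M).

Let Msym i j : M j i = M i j.
Proof. by rewrite -[in LHS]trM mxE. Qed.

Let tuple_inj k (t : k.-tuple 'I_n) : uniq t -> injective (tnth t).
Proof. by move/tuple_uniqP. Qed.

Lemma pminor_diag i j : M i i = M j j.
Proof.
have inj1 (u : 'I_n) : injective (fun _ : 'I_1 => u) by move=> x y _; rewrite !ord1.
have := symmetric_shift_det_pminor symM (inj1 i) (inj1 j).
by rewrite !det_mx11 !mxE.
Qed.

Lemma pminor_offdiag_sqr i j i' j' : i != j -> i' != j' ->
  M i j ^+ 2 = M i' j' ^+ 2.
Proof.
move=> ij ij'; have uniq2 (u v : 'I_n) : u != v -> uniq [tuple u; v] by rewrite /= inE andbT.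
have := symmetric_shift_det_pminor symM (tuple_inj (uniq2 _ _ ij)) (tuple_inj (uniq2 _ _ ij')).
rewrite !det_mxsub_tuple2 !(pminor_diag j i) !(pminor_diag j' i) !(pminor_diag i' i).
by rewrite (Msym i j) (Msym i' j') !expr2 => /addrI /oppr_inj.
Qed.

Lemma pminor_triangle i j k i' j' k' :
  uniq [:: i; j; k] -> uniq [:: i'; j'; k'] ->
  M i j * M j k * M i k = M i' j' * M j' k' * M i' k'.
Proof.
move=> u u'.
have := symmetric_shift_det_pminor symM (tuple_inj (t := [tuple i; j; k]) u)
                                        (tuple_inj (t := [tuple i'; j'; k']) u').
have ij : i != j by move: u; rewrite /= inE negb_or => /andP [/andP []].
have det3E x y z : uniq [:: x; y; z] ->
    M x x * (M y y * M z z - M y z * M z y) - M x y * (M y x * M z z - M y z * M z x)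
    + M x z * (M y x * M z y - M y y * M z x)
    = M i i ^+ 3 - 3 * M i i * M i j ^+ 2 + 2 * (M x y * M y z * M x z).
  rewrite /= !inE negb_or andbT => /andP [/andP [xy xz] yz].
  rewrite (pminor_diag x i) (pminor_diag y i) (pminor_diag z i).
  rewrite (Msym x y) (Msym x z) (Msym y z).
  transitivity (M i i ^+ 3 - M i i * (M x y ^+ 2 + M x z ^+ 2 + M y z ^+ 2)
                + 2 * (M x y * M y z * M x z)); first by ring.
  by rewrite (pminor_offdiag_sqr xy ij) (pminor_offdiag_sqr xz ij) (pminor_offdiag_sqr yz ij); ring.
rewrite !det_mxsub_tuple3 !det3E // => /addrI; apply: mulfI.
by rewrite pnatr_eq0.
Qed.
End PrincipalMinorsEntries.
Lemma sqr_cube_inj (R : idomainType) (x y : R) :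
  x ^+ 2 = y ^+ 2 -> x ^+ 3 = y ^+ 3 -> x = y.
Proof.
move=> sq cu; have [y0|y_neq0] := eqVneq y 0.
  by move/eqP: sq; rewrite y0 expr0n /= sqrf_eq0 => /eqP.
apply: (mulIf (expf_neq0 2 y_neq0)).
by rewrite -[y * _]exprS -cu (exprS x 2) sq.
Qed.

Lemma exists_sqr_cube (F : fieldType) (b c : F) : c ^+ 2 = b ^+ 6 ->
  exists be, be ^+ 2 = b ^+ 2 /\ be ^+ 3 = c.
Proof.
move=> cb; have [b0|b_neq0] := eqVneq b 0.
  exists 0; move/eqP: cb; rewrite b0 !expr0n /= sqrf_eq0 => /eqP ->.
  by split.
exists (c / b ^+ 2); rewrite !expr_div_n -!exprM /= (exprS c 2) cb.
by rewrite mulfK ?expf_neq0 // (exprD b 2 4) mulfK ?expf_neq0.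
Qed.

Lemma toeplitz_tr (R : realType) n (al be : R) : (toeplitz n al be)^T = toeplitz n al be.
Proof. by apply/matrixP => i j; rewrite !mxE eq_sym. Qed.

Lemma toeplitz_sign_conj (R : realType) n (M : 'M[R]_n) al be :
  M^T = M -> (forall i, M i i = al) ->
  (forall i j, i != j -> M i j ^+ 2 = be ^+ 2) ->
  (forall i j k, uniq [:: i; j; k] -> M i j * M j k * M i k = be ^+ 3) ->
  exists e : 'I_n -> R,
    (forall i, e i ^+ 2 = 1) /\ forall i j, M i j = e i * e j * toeplitz n al be i j.
Proof.
move=> trM Mdiag Msq Mtri.
have Msym i j : M j i = M i j by rewrite -[in LHS]trM mxE.
have [be0|be_neq0] := eqVneq be 0.
  exists (fun=> 1); split=> [i|i j]; first by rewrite expr1n.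
  rewrite !mul1r mxE; have [<-|ij] := eqVneq i j; first exact: Mdiag.
  by rewrite be0; apply/eqP; rewrite -sqrf_eq0 Msq // be0 expr0n.
case: n M trM Mdiag Msq Mtri Msym => [|n] M trM Mdiag Msq Mtri Msym.
  by exists (fun=> 1); split; case.
have M0_sqr i : i != ord0 -> M ord0 i ^+ 2 = be ^+ 2 by rewrite eq_sym; apply: Msq.
have M0_neq0 i : i != ord0 -> M ord0 i != 0.
  by move/M0_sqr => sq; rewrite -sqrf_eq0 sq sqrf_eq0.
pose e i := if i == ord0 then 1 else M ord0 i / be.
have e_sqr i : e i ^+ 2 = 1.
  rewrite /e; case: eqVneq => [_|i0]; first by rewrite expr1n.
  by rewrite expr_div_n M0_sqr // divff // sqrf_eq0.
exists e; split=> // i j; rewrite mxE.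
have [<-|ij] := eqVneq i j; first by rewrite -expr2 e_sqr mul1r.
case: (eqVneq i ord0) ij => [-> ij|i0 ij].
  by rewrite /e eqxx eq_sym (negbTE ij) mul1r divfK.
case: (eqVneq j ord0) ij => [-> ij|j0 ij].
  by rewrite /e eqxx (negbTE i0) mulr1 divfK // Msym.
rewrite /e (negbTE i0) (negbTE j0).
have u : uniq [:: ord0; i; j] by rewrite /= !inE negb_or ij andbT !(eq_sym ord0) i0 j0.
apply: (mulfI (mulf_neq0 (M0_neq0 _ i0) (M0_neq0 _ j0))).
transitivity (M ord0 i * M i j * M ord0 j); first by ring.
rewrite Mtri //.
transitivity (M ord0 i ^+ 2 * M ord0 j ^+ 2 / be); last by field.
by rewrite !M0_sqr //; field.
Qed.

Section AssociatedMatrices.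
Variables (R : realType) (d : nat) (a : 'I_d -> R).

Lemma detzI_horner0 n (M : 'M[R]_n) : (detzI M).[0] = \det M.
Proof.
rewrite /detzI -horner_evalE -det_map_mx; congr (\det _).
apply/matrixP => i j; rewrite !mxE /= horner_evalE hornerD hornerC hornerMn hornerX.
by rewrite mul0rn add0r.
Qed.

Lemma associated_shift_det (A : 'M[R]_d) l : associated a A ->
  shift_det A l = (pa a (\prod_(i < d) ('X + (l i)%:P)) 1).[0].
Proof. by case=> _ A_pa; rewrite /shift_det A_pa scale1r detzI_horner0. Qed.

Lemma associated_same_shift_det (A B : 'M[R]_d) :
  associated a A -> associated a B -> same_shift_det A B.
Proof. by move=> A_assoc B_assoc l; rewrite !associated_shift_det. Qed.

Lemma associated_symmetric_shift_det (A : 'M[R]_d) :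
  associated a A -> symmetric_shift_det A.
Proof.
move=> A_assoc s l; rewrite !associated_shift_det //.
by rewrite [in RHS](reindex_inj (@perm_inj _ s)).
Qed.

Lemma associated_sign_conj (A B : 'M[R]_d) (e : 'I_d -> R) :
  associated a A -> B^T = B -> (forall i, e i ^+ 2 = 1) ->
  (forall i j, A i j = e i * e j * B i j) -> associated a B.
Proof.
move=> [_ A_pa] trB e_sqr AB; split=> // l s; rewrite A_pa /detzI.
pose S : 'M[{poly R}]_d := diag_mx (\row_i (e i)%:P).
have SS : S *m S = 1%:M.
  apply/matrixP => i j; rewrite mul_diag_mx !mxE mulrnAr -polyCM -expr2 e_sqr.
  by case: (i == j).
have -> : 'X%:M + map_mx polyC (diag_mx (\row_i l i) + s *: A) =
    S *m ('X%:M + map_mx polyC (diag_mx (\row_i l i) + s *: B)) *m S.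
  apply/matrixP => i j; rewrite mul_mx_diag mul_diag_mx !mxE AB.
  have [<-|ij] := eqVneq i j; last by rewrite !mulr0n !add0r !polyCM; ring.
  rewrite !mulr1n -expr2 e_sqr mul1r -[LHS]mul1r -polyC1 -(e_sqr i) expr2 polyCM.
  ring.
by rewrite !det_mulmx mulrC mulrA -det_mulmx SS det1 mul1r.
Qed.
End AssociatedMatrices.

Lemma toeplitz_diag (R : realType) n (al be : R) i : toeplitz n al be i i = al.
Proof. by rewrite mxE eqxx. Qed.

Lemma toeplitz_offdiag (R : realType) n (al be : R) i j :
  i != j -> toeplitz n al be i j = be.
Proof. by rewrite mxE => /negbTE ->. Qed.

Section ToeplitzRepresentatives.
Variables (R : realType) (d : nat) (a : 'I_d -> R).
Hypothesis d_gt1 : (1 < d)%N.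

Let i0 : 'I_d := Ordinal (ltnW d_gt1).
Let i1 : 'I_d := Ordinal d_gt1.

Lemma associated_toeplitz_exists (A : 'M[R]_d) :
  associated a A -> exists alpha beta, associated a (toeplitz d alpha beta).
Proof.
move=> A_assoc; have [trA _] := A_assoc.
have symA := associated_symmetric_shift_det A_assoc.
have A_sqr i j : i != j -> A i j ^+ 2 = A i0 i1 ^+ 2.
  by move=> ij; apply: pminor_offdiag_sqr.
have [be [be_sqr A_tri]] : exists be, be ^+ 2 = A i0 i1 ^+ 2 /\
    (forall i j k, uniq [:: i; j; k] -> A i j * A j k * A i k = be ^+ 3).
  have [d_gt2|d_le2] := ltnP 2 d.
    pose i2 : 'I_d := Ordinal d_gt2.
    have [|be [be_sqr be_cube]] := @exists_sqr_cube _ (A i0 i1) (A i0 i1 * A i1 i2 * A i0 i2).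
      by rewrite !exprMn (A_sqr i1 i2) // (A_sqr i0 i2) // -!exprD.
    exists be; split=> // i j k u; rewrite be_cube; exact: pminor_triangle.
  exists (A i0 i1); split=> // i j k u.
  have sub : {subset [:: i; j; k] <= enum 'I_d} by move=> x _; rewrite mem_enum.
  by have := uniq_leq_size u sub; rewrite size_enum_ord leqNgt (leq_ltn_trans d_le2).
have [e [e_sqr Ae]] : exists e : 'I_d -> R, (forall i, e i ^+ 2 = 1) /\
    (forall i j, A i j = e i * e j * toeplitz d (A i0 i0) be i j).
  apply: toeplitz_sign_conj A_tri => // [i|i j ij]; first exact: pminor_diag.
  by rewrite be_sqr; apply: A_sqr.
by exists (A i0 i0), be; apply: associated_sign_conj A_assoc (toeplitz_tr _ _ _) e_sqr Ae.
Qed.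

Section Uniqueness.
Variables (al be al' be' : R).
Hypotheses (T : associated a (toeplitz d al be)) (T' : associated a (toeplitz d al' be')).

Let toeplitz_pminor k (t : k.-tuple 'I_d) : uniq t ->
  \det (mxsub (tnth t) (tnth t) (toeplitz d al' be'))
  = \det (mxsub (tnth t) (tnth t) (toeplitz d al be)).
Proof.
move/tuple_uniqP => injt.
exact: same_shift_det_pminor (associated_same_shift_det T' T) injt.
Qed.

Lemma associated_toeplitz_alpha : al' = al.
Proof.
by have := toeplitz_pminor (t := [tuple i0]) isT; rewrite !det_mx11 !mxE !eqxx.
Qed.

Lemma associated_toeplitz_beta_sqr : be' ^+ 2 = be ^+ 2.
Proof.
have := toeplitz_pminor (t := [tuple i0; i1]) isT.
rewrite !det_mxsub_tuple2 !toeplitz_diag !toeplitz_offdiag // associated_toeplitz_alpha.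
by rewrite -!expr2 => /addrI /oppr_inj.
Qed.

Lemma associated_toeplitz_beta : (2 < d)%N -> be' = be.
Proof.
move=> d_gt2; pose i2 : 'I_d := Ordinal d_gt2.
apply: sqr_cube_inj associated_toeplitz_beta_sqr _.
have := toeplitz_pminor (t := [tuple i0; i1; i2]) isT.
rewrite !det_mxsub_tuple3 !toeplitz_diag !toeplitz_offdiag // associated_toeplitz_alpha.
have det3E x : al * (al * al - x * x) - x * (x * al - x * x) + x * (x * x - al * x)
    = al ^+ 3 - 3 * al * x ^+ 2 + 2 * x ^+ 3 by ring.
rewrite !det3E associated_toeplitz_beta_sqr => /addrI; apply: mulfI.
by rewrite pnatr_eq0.
Qed.
End Uniqueness.
End ToeplitzRepresentatives.

Lemma associated_toeplitz2_opp (R : realType) (a : 'I_2 -> R) (al be : R) :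
  associated a (toeplitz 2 al be) -> associated a (toeplitz 2 al (- be)).
Proof.
move=> T; apply: (associated_sign_conj (e := fun i : 'I_2 => (-1) ^+ i)) T _ _ _.
- exact: toeplitz_tr.
- by move=> i; rewrite -exprM mulnC exprM sqrrN !expr1n.
- by case=> [[|[|//]] ?] [[|[|//]] ?]; rewrite !mxE /=; ring.
Qed.

Theorem proposition3p2 (R : realType) (d : nat) (a : 'I_d -> R) :
  (2 <= d)%N -> UN a ->
  (exists alpha beta : R, associated a (toeplitz d alpha beta)) /\
  (forall alpha beta alpha' beta' : R,
      associated a (toeplitz d alpha beta) ->
      associated a (toeplitz d alpha' beta') -> alpha' = alpha) /\
  (d = 2%N -> forall alpha beta : R,
      associated a (toeplitz d alpha beta) ->
      associated a (toeplitz d alpha (- beta)) /\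
      (forall beta' : R, associated a (toeplitz d alpha beta') ->
                         beta' = beta \/ beta' = - beta)) /\
  ((3 <= d)%N -> forall alpha beta alpha' beta' : R,
      associated a (toeplitz d alpha beta) ->
      associated a (toeplitz d alpha' beta') -> beta' = beta).
Proof.
move=> d_gt1 [_ [A A_assoc]].
split; first exact: associated_toeplitz_exists A_assoc.
split; first by move=> al be al' be' T T'; exact: associated_toeplitz_alpha T T'.
split; last by move=> d_gt2 al be al' be' T T'; exact: associated_toeplitz_beta T T' d_gt2.
move=> d2 al be T; split; first by subst d; apply: associated_toeplitz2_opp.
move=> be' T'; have /eqP := associated_toeplitz_beta_sqr d_gt1 T T'.
by rewrite eqf_sqr => /orP [] /eqP; [left|right].
Qed.
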